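(* Let $n\geq m\geq 1$ be integers, and let $\mathcal{A}=\{H_1,\ldots,H_m\}$ be a toric arrangement in $(\mathbb{C}^{*})^n$, where $$H_i=\{(z_1,\ldots,z_n)\in(\mathbb{C}^* )^n : z_1^{p_{i,1}}\cdots z_n^{p_{i,n}}=\alpha_i\},\qquad p_{i,j}\in\mathbb{Z},\ \alpha_i\in\mathbb{C}^*,$$ for $1\leq i\leq m$, $1\leq j\leq n$. Let $\tilde{M}_{\mathcal{A}}=(p_{i,j})\in M_{m,n}(\mathbb{Z})$ be its associated matrix. If $\tilde{M}_{\mathcal{A}}$ has rank $m$, then there exists a centered toric arrangement $\mathcal{B}=\{T_1,\ldots,T_m\}$ in $(\mathbb{C}^* )^n$ such that the complement manifolds $M(\mathcal{A})$ and $M(\mathcal{B})$ are diffeomorphic.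
   Context: A toric arrangement in $(\mathbb{C}^* )^n$ is a finite collection of subtori of the form $\{(z_1,\ldots,z_n)\in(\mathbb{C}^* )^n : z_1^{q_1}\cdots z_n^{q_n}=\beta\}$ with $q_j\in\mathbb{Z}$, $\beta\in\mathbb{C}^*$. Its complement manifold $M(\cdot)$ is $(\mathbb{C}^* )^n$ minus the union of its subtori. The associated matrix of the arrangement $\{H_1,\dots,H_m\}$ is the $m\times n$ integer matrix whose $i$-th row is the exponent vector $(p_{i,1},\ldots,p_{i,n})$ of $H_i$. A toric arrangement is centered if all the constants $\beta$ on the right-hand sides of its defining equations equal $1$. *)

From HB Require Import structures.
From mathcomp Require Import all_boot all_order all_algebra.
From mathcomp Require Import all_classical all_reals all_analysis.
From mathcomp Require Import complex.
Set Implicit Arguments. Unset Strict Implicit. Unset Printing Implicit Defensive.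
Import Order.TTheory GRing.Theory Num.Theory.
Import numFieldNormedType.Exports.
Local Open Scope classical_set_scope.
Local Open Scope ring_scope.

(* Complex numbers are modelled by R[i] for an arbitrary realType R;
   points of C^n are row vectors 'rV[R[i]]_n. *)

Definition monomial (R : realType) (n : nat) (p : 'rV[int]_n) (z : 'rV[R[i]]_n)
  : R[i] := \prod_(j < n) (z 0 j) ^ (p 0 j).

Definition torus (R : realType) (n : nat) : set 'rV[R[i]]_n :=
  [set z | forall j, z 0 j != 0].

(* The toric arrangement {H_1..H_m}, H_i = {z in (C^* )^n | z^{P_i} = alpha_i},
   given by its associated matrix P (row i = exponent vector of H_i) and
   the constants alpha. Its complement manifold: *)
Definition complement (R : realType) (m n : nat) (P : 'M[int]_(m, n))
  (alpha : 'I_m -> R[i]) : set 'rV[R[i]]_n :=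
  [set z | torus z /\ forall i : 'I_m, monomial (row i P) z != alpha i].

Definition realify (R : realType) (n : nat) (z : 'rV[R[i]]_n) : 'rV[R]_(n + n) :=
  row_mx (\row_j complex.Re (z 0 j)) (\row_j complex.Im (z 0 j)).
Definition complexify (R : realType) (n : nat) (w : 'rV[R]_(n + n)) : 'rV[R[i]]_n :=
  \row_j (Complex ((lsubmx w) 0 j) ((rsubmx w) 0 j) : R[i]).

Arguments realify {R n}.
Arguments complexify {R n}.
Arguments monomial {R n}.
Arguments torus {R n}.
Arguments complement {R m n}.

Fixpoint iterD (R : realType) (V W : normedModType R) (vs : seq V) (f : V -> W)
  : V -> W :=
  match vs with
  | [::] => f
  | v :: vs' => 'D_v (iterD vs' f)
  end.

Definition smooth_on (R : realType) (V W : normedModType R) (U : set V)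
  (f : V -> W) : Prop :=
  open U /\
  forall vs : seq V,
    (forall x, U x -> {for x, continuous (iterD vs f)}) /\
    (forall x v, U x -> derivable (iterD vs f) x v).

Definition diffeomorphic (R : realType) (n : nat) (A B : set 'rV[R[i]]_n) : Prop :=
  exists (f g : 'rV[R[i]]_n -> 'rV[R[i]]_n),
    (forall z, A z -> B (f z)) /\ (forall z, B z -> A (g z)) /\
    (forall z, A z -> g (f z) = z) /\ (forall z, B z -> f (g z) = z) /\
    smooth_on (realify @` A) (fun w => realify (f (complexify w))) /\
    smooth_on (realify @` B) (fun w => realify (g (complexify w))).

Definition int_to_rat (x : int) : rat := x%:~R.

From Pilot Require Import Defs.
From HB Require Import structures.
From mathcomp Require Import all_boot all_order all_algebra.
From mathcomp Require Import all_classical all_reals all_analysis.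
From mathcomp Require Import complex.
From mathcomp Require Import ring.
Set Implicit Arguments. Unset Strict Implicit. Unset Printing Implicit Defensive.
Import Order.TTheory GRing.Theory Num.Theory.
Local Open Scope ring_scope.

(* Since the exponent matrix P has full row rank, the monomial map
   z |-> (z^P_1, ..., z^P_m) from (C^* )^n to (C^* )^m is onto: writing the
   Smith normal form P = L D Q with L, Q unimodular, this reduces to the
   diagonal matrix D, whose diagonal entries are nonzero, and there it only
   amounts to extracting roots in C.  Pick c with c^P_i = alpha_i for all i.
   The translation z |-> c^-1 z of the torus maps M(A) onto the complement of
   the centered arrangement with the same matrix, and it is the restriction
   of a linear automorphism of C^n = R^2n, hence a diffeomorphism. *)

Section TorusMonomials.
Variable F : fieldType.

Definition torus_pt n (x : 'rV[F]_n) := forall j, x 0 j != 0.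

Definition torus_mul n (c z : 'rV[F]_n) : 'rV[F]_n := \row_j (c 0 j * z 0 j).
Definition torus_inv n (c : 'rV[F]_n) : 'rV[F]_n := \row_j (c 0 j)^-1.

Definition monomial_map m n (P : 'M[int]_(m, n)) (x : 'rV[F]_n) : 'rV[F]_m :=
  \row_i \prod_j x 0 j ^ P i j.

Lemma torus_pt_mul n (c z : 'rV[F]_n) :
  torus_pt c -> torus_pt z -> torus_pt (torus_mul c z).
Proof. by move=> hc hz j; rewrite mxE mulf_neq0. Qed.

Lemma torus_pt_inv n (c : 'rV[F]_n) : torus_pt c -> torus_pt (torus_inv c).
Proof. by move=> hc j; rewrite mxE invr_eq0. Qed.

Lemma torus_mulK n (c : 'rV[F]_n) :
  torus_pt c -> cancel (torus_mul c) (torus_mul (torus_inv c)).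
Proof. by move=> hc z; apply/rowP => j; rewrite !mxE mulKf. Qed.

Lemma torus_invK n (c : 'rV[F]_n) :
  torus_pt c -> cancel (torus_mul (torus_inv c)) (torus_mul c).
Proof. by move=> hc z; apply/rowP => j; rewrite !mxE mulVKf. Qed.

Lemma expfz_sum (x : F) I (r : seq I) (P : pred I) (k : I -> int) : x != 0 ->
  x ^ (\sum_(i <- r | P i) k i) = \prod_(i <- r | P i) x ^ k i.
Proof.
move=> x0.
by apply: (big_morph (fun k => x ^ k) (fun k1 k2 => expfzDr k1 k2 x0) (expr0z x)).
Qed.

Lemma prodfXzl I (r : seq I) (P : pred I) (f : I -> F) (k : int) :
  \prod_(i <- r | P i) f i ^ k = (\prod_(i <- r | P i) f i) ^ k.
Proof.
by rewrite (big_morph (fun y => y ^ k) (fun y1 y2 => expfzMl y1 y2 k) (exp1rz _ k)).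
Qed.

Lemma monomial_map_torus_pt m n (P : 'M[int]_(m, n)) x :
  torus_pt x -> torus_pt (monomial_map P x).
Proof. by move=> hx i; rewrite mxE; apply/prodf_neq0 => j _; exact: expfz_neq0. Qed.

Lemma monomial_mapM m n p (A : 'M[int]_(m, n)) (B : 'M[int]_(n, p)) x :
  torus_pt x -> monomial_map (A *m B) x = monomial_map A (monomial_map B x).
Proof.
move=> hx; apply/rowP => i; rewrite !mxE.
under eq_bigr => k _ do rewrite mxE expfz_sum //.
rewrite exchange_big /=; apply: eq_bigr => j _.
rewrite mxE -prodfXzl; apply: eq_bigr => k _.
by rewrite exprz_exp mulrC.
Qed.

Lemma monomial_map1 n x : monomial_map (1%:M : 'M[int]_n) x = x.
Proof.
apply/rowP => i; rewrite mxE (bigD1 i) //= big1 ?mulr1 => [|j ji].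
  by rewrite mxE eqxx.
by rewrite mxE eq_sym (negbTE ji).
Qed.

Lemma monomial_map_invmx n (U : 'M[int]_n) x : U \in unitmx -> torus_pt x ->
  monomial_map U (monomial_map (invmx U) x) = x.
Proof. by move=> hU hx; rewrite -monomial_mapM // mulmxV // monomial_map1. Qed.

Lemma monomial_map_mul m n (P : 'M[int]_(m, n)) c z :
  monomial_map P (torus_mul c z) = torus_mul (monomial_map P c) (monomial_map P z).
Proof.
apply/rowP => i; rewrite !mxE -big_split; apply: eq_bigr => j _.
by rewrite mxE expfzMl.
Qed.

Lemma monomial_map_inv m n (P : 'M[int]_(m, n)) c :
  monomial_map P (torus_inv c) = torus_inv (monomial_map P c).
Proof.
apply/rowP => i; rewrite !mxE -prodfV; apply: eq_bigr => j _.
by rewrite mxE expfV.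
Qed.

End TorusMonomials.

Section MonomialMapSurjective.
Variable F : numClosedFieldType.

Definition rootz (k : int) (a : F) : F :=
  match k with Posz k => k.-root a | Negz k => k.+1.-root a^-1 end.

Lemma rootzK k a : k != 0 -> rootz k a ^ k = a.
Proof.
case: k => [[|k]|k] //= _; first by rewrite -exprnP rootCK.
by rewrite NegzE -invr_expz -exprnP rootCK // invrK.
Qed.

Lemma rootz_neq0 k a : k != 0 -> a != 0 -> rootz k a != 0.
Proof.
move=> k0; apply: contra_neq => r0.
by rewrite -(rootzK a k0) r0 exp0rz (negbTE k0).
Qed.

Definition diag_int_mx m n (d : seq int) : 'M[int]_(m, n) :=
  \matrix_(i, j) (d`_i *+ (i == j :> nat)).

Lemma monomial_map_diag_surj m n (d : seq int) (a : 'rV[F]_m) :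
  (m <= n)%N -> (forall i : 'I_m, d`_i != 0) -> torus_pt a ->
  exists2 u : 'rV[F]_n, torus_pt u & monomial_map (diag_int_mx m n d) u = a.
Proof.
move=> mn d0 ha.
pose u := \row_(j < n) oapp (fun i : 'I_m => rootz (d`_i) (a 0 i)) 1 (insub (val j)).
exists u => [j|].
  by rewrite mxE; case: insubP => [i _ _ /=|_]; [exact: rootz_neq0 | exact: oner_neq0].
apply/rowP => i; rewrite mxE (bigD1 (widen_ord mn i)) //= big1 ?mulr1 => [|j ji].
  by rewrite !mxE eqxx mulr1n valK rootzK.
rewrite !mxE; have /negbTE-> : (i != j :> nat).
  by apply: contra ji => /eqP ij; apply/eqP/val_inj.
by rewrite mulr0n expr0z.
Qed.

Lemma smith_diag_neq0 m n (P : 'M[int]_(m, n)) L (d : seq int) Q :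
  row_free (map_mx int_to_rat P) -> L \in unitmx ->
  P = L *m diag_int_mx m n d *m Q -> forall i : 'I_m, d`_i != 0.
Proof.
move=> hfree hL eP i; apply/negP => /eqP di0.
pose v : 'rV[int]_m := delta_mx 0 i.
have vD : v *m diag_int_mx m n d = 0.
  apply/rowP => j; rewrite !mxE (bigD1 i) //= big1 ?addr0 => [|k ki].
    by rewrite !mxE di0 mul0rn mulr0.
  by rewrite !mxE (negbTE ki) andbF mul0r.
have vLP : v *m invmx L *m P = 0.
  by rewrite eP !mulmxA -(mulmxA v) mulVmx // mulmx1 vD mul0mx.
have vL0 : v *m invmx L = 0.
  apply/rowP => j; rewrite [RHS]mxE; apply/eqP; rewrite -(intr_eq0 rat).
  have : map_mx int_to_rat (v *m invmx L) *m map_mx int_to_rat P == 0.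
    by rewrite -map_mxM vLP map_mx0.
  by rewrite mulmx_free_eq0 // => /eqP/rowP/(_ j); rewrite !mxE /int_to_rat => ->.
have := congr1 (mulmx^~ L) vL0; rewrite -mulmxA mulVmx // mulmx1 mul0mx.
by move/rowP/(_ i); rewrite !mxE !eqxx.
Qed.

Theorem monomial_map_surj m n (P : 'M[int]_(m, n)) (a : 'rV[F]_m) :
  row_free (map_mx int_to_rat P) -> torus_pt a ->
  exists2 c : 'rV[F]_n, torus_pt c & monomial_map P c = a.
Proof.
move=> hfree ha.
have mn : (m <= n)%N.
  by rewrite -row_leq_rank in hfree; exact: leq_trans hfree (rank_leq_col _).
have [L hL [Q hQ [d _ eP]]] := int_Smith_normal_form P.
have [u hu hDu] := monomial_map_diag_surj mn (smith_diag_neq0 hfree hL eP)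
  (monomial_map_torus_pt (invmx L) ha).
have hc : torus_pt (monomial_map (invmx Q) u) by exact: monomial_map_torus_pt.
exists (monomial_map (invmx Q) u) => //.
rewrite eP !monomial_mapM ?monomial_map_torus_pt // monomial_map_invmx //.
by rewrite hDu monomial_map_invmx.
Qed.

End MonomialMapSurjective.

Lemma monomial_rowE (R : realType) m n (P : 'M[int]_(m, n)) k (z : 'rV[R[i]]_n) :
  monomial (row k P) z = monomial_map P z 0 k.
Proof. by rewrite mxE; apply: eq_bigr => j _; rewrite mxE. Qed.

Lemma complement_torus_mul (R : realType) m n (P : 'M[int]_(m, n))
    (beta gamma : 'I_m -> R[i]) (c z : 'rV[R[i]]_n) :
  torus_pt c -> (forall k, monomial_map P c 0 k * beta k = gamma k) ->
  complement P beta z -> complement P gamma (torus_mul c z).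
Proof.
move=> hc hcg [hz hbeta]; split; first exact: torus_pt_mul.
move=> k; rewrite monomial_rowE monomial_map_mul mxE -hcg.
by rewrite (inj_eq (mulfI (monomial_map_torus_pt P hc k))) -monomial_rowE.
Qed.

Import numFieldNormedType.Exports.
Local Open Scope classical_set_scope.

Section SmoothLinear.
Variables (R : realType) (V W : normedModType R) (f : V -> W).
Hypotheses (f_linear : linear f) (f_cont : continuous f).

Let fL : {linear V -> W} := HB.pack f (GRing.isLinear.Build _ _ _ _ f f_linear).

Lemma derive_linear x v : 'D_v f x = f v.
Proof.
rewrite deriveE; last exact: (linear_differentiable (f := fL)).
by rewrite (diff_lin (f := fL)).
Qed.

Lemma iterD_linear (vs : seq V) :
  Defs.iterD vs f = f \/ exists w, Defs.iterD vs f = cst w.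
Proof.
elim: vs => [|v vs IH] /=; first by left.
right; case: IH => [->|[w ->]].
- by exists (f v); apply/funext => x; rewrite derive_linear.
- by exists 0; apply/funext => x; rewrite derive_cst.
Qed.

Lemma smooth_on_linear U : open U -> smooth_on U f.
Proof.
move=> oU; split=> // vs; have [->|[w ->]] := iterD_linear vs; split=> x.
- by move=> _; exact: f_cont.
- by move=> v _; exact/diff_derivable/(linear_differentiable (f := fL)).
- by move=> _; exact: cst_continuous.
- by move=> v _; exact: derivable_cst.
Qed.

End SmoothLinear.

Lemma continuous_rV (R : realType) (T : topologicalType) p (f : T -> 'rV[R]_p) x :
  (forall k, {for x, continuous (fun t => f t 0 k)}) -> {for x, continuous f}.
Proof.
move=> hf A /nbhs_ballP [e e0 eA].
have : \forall y \near x, forall k, ball (f x 0 k) e (f y 0 k).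
  by apply: filter_forall => k; exact: (hf k) _ (nbhsx_ballx _ _ e0).
apply: filterS => y hy; apply: eA; split => // i j; rewrite (ord1 i); exact: hy j.
Qed.

Section Realify.
Variables (R : realType) (n : nat).
Local Notation V := 'rV[R]_(n + n).

Lemma realifyK : cancel (@realify R n) complexify.
Proof.
move=> z; apply/rowP => j; rewrite /complexify /realify mxE row_mxKl row_mxKr !mxE.
by case: (z 0 j).
Qed.

Lemma complexifyK : cancel (@complexify R n) realify.
Proof.
move=> w; rewrite /complexify /realify -[RHS]hsubmxK.
by congr row_mx; apply/rowP => j; rewrite !mxE.
Qed.

Lemma image_realify (A : set 'rV[R[i]]_n) : realify @` A = complexify @^-1` A.
Proof.
apply/seteqP; split => [_ [z Az <-]|w Aw]; first by rewrite /= realifyK.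
by exists (complexify w); rewrite ?complexifyK.
Qed.

Lemma complexifyE (w : V) j :
  complexify w 0 j = Complex (w 0 (lshift n j)) (w 0 (rshift n j)).
Proof. by rewrite !mxE. Qed.

Definition realify_mul (c : 'rV[R[i]]_n) (w : V) : V :=
  realify (torus_mul c (complexify w)).

Lemma realify_mul_lshift c w j : realify_mul c w 0 (lshift n j) =
  complex.Re (c 0 j) * w 0 (lshift n j) - complex.Im (c 0 j) * w 0 (rshift n j).
Proof. by rewrite /realify_mul /realify row_mxEl !mxE; case: (c 0 j). Qed.

Lemma realify_mul_rshift c w j : realify_mul c w 0 (rshift n j) =
  complex.Re (c 0 j) * w 0 (rshift n j) + complex.Im (c 0 j) * w 0 (lshift n j).
Proof.
by rewrite /realify_mul /realify row_mxEr !mxE; case: (c 0 j) => a b /=; rewrite addrC.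
Qed.

Lemma realify_mul_linear c : linear (realify_mul c).
Proof.
move=> h v w; apply/rowP => k; rewrite -(splitK k); case: (fintype.split k) => j /=.
  by rewrite !(realify_mul_lshift, mxE); ring.
by rewrite !(realify_mul_rshift, mxE); ring.
Qed.

Lemma continuous_realify_mul c : continuous (realify_mul c).
Proof.
move=> w; apply: continuous_rV => k; rewrite -(splitK k).
case: (fintype.split k) => j /=.
  rewrite (funext (realify_mul_lshift c ^~ j)).
  by apply: continuousB; apply: continuousM;
    exact: cst_continuous || exact: coord_continuous.
rewrite (funext (realify_mul_rshift c ^~ j)).
by apply: continuousD; apply: continuousM;
  exact: cst_continuous || exact: coord_continuous.
Qed.

End Realify.

Lemma continuous_exprn (K : numFieldType) k : continuous (fun x : K => x ^+ k).
Proof.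
elim: k => [|k IH] x.
  by rewrite (funext (@expr0 K)); exact: cst_continuous.
by rewrite (funext (@exprS K ^~ k)); exact: (@continuousM _ _ id _ x cvg_id (IH x)).
Qed.

Lemma exprz_continuous (K : numFieldType) (x : K) (k : int) :
  x != 0 -> {for x, continuous (fun y : K => y ^ k)}.
Proof.
case: k => k x0; first exact: continuous_exprn.
by apply: continuousV; [rewrite expf_neq0 | exact: continuous_exprn].
Qed.

Section ComplexifyContinuous.
Variables (R : realType) (n : nat).
Local Notation C := (R[i] : numFieldType).

Lemma continuous_real_complex : continuous (fun r : R => (r%:C)%C : C).
Proof.
move=> r; apply/cvgrPdist_lt => e; rewrite ltcE => /andP [Ie0 e0] /=.
near=> t; rewrite -rmorphB normc_def /= expr0n /= addr0 sqrtr_sqr ltcE /= Ie0 /=.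
near: t; exact: (@cvgrPdist_lt _ _ _ _ _ (fun t : R => t) r).1 (@cvg_id _ _) _ e0.
Unshelve. all: by end_near.
Qed.

Lemma continuous_Complex (T : topologicalType) (f g : T -> R) x :
  {for x, continuous f} -> {for x, continuous g} ->
  {for x, continuous (fun y => Complex (f y) (g y) : C)}.
Proof.
move=> fx gx.
have -> : (fun y => Complex (f y) (g y) : C) = (fun y => ((f y)%:C + (g y)%:C * 'i)%C).
  apply/funext => y; apply/eqP; rewrite eq_complex /=.
  by rewrite !mulr0 !mul0r !subr0 !addr0 !add0r mulr1 !eqxx.
apply: continuousD; last apply: continuousM; last exact: cst_continuous.
  exact: (continuous_comp fx (@continuous_real_complex (f x))).
exact: (continuous_comp gx (@continuous_real_complex (g x))).
Qed.

Lemma continuous_complexify_coord j :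
  continuous (fun w : 'rV[R]_(n + n) => complexify w 0 j : C).
Proof.
move=> w; rewrite (funext (fun w : 'rV[R]_(n + n) => complexifyE w j)).
by apply: continuous_Complex; exact: coord_continuous.
Qed.

Lemma continuous_monomial_complexify (p : 'rV[int]_n) (w : 'rV[R]_(n + n)) :
  torus (complexify w) ->
  {for w, continuous (fun w => monomial p (complexify w) : C)}.
Proof.
move=> hw; rewrite /monomial; apply: (cvg_big mul_continuous (nbhs_filter w)) => j _.
exact: continuous_comp (@continuous_complexify_coord j w) (exprz_continuous (hw j)).
Qed.

Lemma open_realify_complement m (P : 'M[int]_(m, n)) (alpha : 'I_m -> R[i]) :
  open (realify @` complement P alpha).
Proof.
rewrite image_realify openE => w [hw hP]; near=> y; split.
  near: y; apply: filter_forall => j.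
  exact: cvgr_neq0 (@continuous_complexify_coord j w) (hw j).
near: y; apply: filter_forall => k.
have /cvgr_neq0 : (fun y => monomial (row k P) (complexify y) - alpha k : C) @ w -->
    (monomial (row k P) (complexify w) - alpha k : C).
  exact: cvgB (continuous_monomial_complexify (p := row k P) hw) (cvg_cst _).
by rewrite subr_eq0 => /(_ (hP k)); apply: filterS => y; rewrite subr_eq0.
Unshelve. all: by end_near.
Qed.

Lemma smooth_on_realify_mul m (P : 'M[int]_(m, n)) (beta : 'I_m -> R[i])
    (c : 'rV[R[i]]_n) :
  smooth_on (realify @` complement P beta) (realify_mul c).
Proof.
apply: smooth_on_linear; [exact: realify_mul_linear | exact: continuous_realify_mul |
  exact: open_realify_complement].
Qed.

End ComplexifyContinuous.

Theorem theorem2p1 (R : realType) (n m : nat) (hm : (1 <= m)%N) (hmn : (m <= n)%N)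
  (P : 'M[int]_(m, n)) (alpha : 'I_m -> R[i])
  (halpha : forall i, alpha i != 0)
  (hrank : \rank (map_mx int_to_rat P) = m) :
  exists Q : 'M[int]_(m, n),
    diffeomorphic (complement P alpha) (complement Q (fun _ => 1)).
Proof.
have hfree : row_free (map_mx int_to_rat P) by rewrite /row_free hrank.
have alpha_torus : torus_pt (\row_k alpha k) by move=> k; rewrite mxE; exact: halpha.
have [c hc hcP] := monomial_map_surj hfree alpha_torus.
have monc k : monomial_map P c 0 k = alpha k by rewrite hcP mxE.
exists P, (torus_mul (torus_inv c)), (torus_mul c).
split; [|split; [|split; [|split; [|split]]]].
- move=> z; apply: complement_torus_mul; first exact: torus_pt_inv.
  by move=> k; rewrite monomial_map_inv mxE monc mulVf.
- by move=> z; apply: complement_torus_mul => // k; rewrite monc mulr1.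
- by move=> z _; exact: torus_invK.
- by move=> z _; exact: torus_mulK.
- exact: smooth_on_realify_mul.
- exact: smooth_on_realify_mul.
Qed.
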